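(* Let $n$ and $k$ be integers with $2\le k\le n-1$, and let $G$ be a connected graph with $n$ vertices. (a) If $\chi(G)=k$, then $\sigma_0(G)\ge 2-\frac{k-1}{n}$ and $\sigma_1(G)\ge 4n-3k+3$, and equality holds in either bound if and only if $G=K_{k-1}\vee\overline{K}_{n+1-k}$. (b) If $\omega(G)=k$, then the same two bounds hold, and equality holds in either bound if and only if $G$ has exactly $k-1$ dominating vertices.
   Context: All graphs are finite, simple, undirected. For a connected graph $G$ and $u\in V(G)$, $\varepsilon_G(u)=\max_{v} d_G(u,v)$; $\sigma_0(G)=\frac1{|V(G)|}\sum_u\varepsilon_G(u)$, $\sigma_1(G)=\sum_u\varepsilon_G(u)^2$. $\chi(G)$ is the chromatic number and $\omega(G)$ the clique number. A dominating vertex is a vertex adjacent to all other vertices. $K_r$ is the complete graph, $\overline{K}_r$ the edgeless graph on $r$ vertices, and $G\vee H$ (the join) is obtained from the disjoint union of $G$ and $H$ by adding all edges between $V(G)$ and $V(H)$. *)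

(* A finite simple graph on a finType T is a relation
   e : rel T that is symmetric and irreflexive. *)
From mathcomp Require Import all_boot all_order all_algebra.
Set Implicit Arguments. Unset Strict Implicit. Unset Printing Implicit Defensive.
Import GRing.Theory Num.Theory.

Section Graphs.
Variable T : finType.
Variable e : rel T.

Definition connected_graph : Prop := forall x y : T, connect e x y.

Fixpoint nball (k : nat) (u : T) : {set T} :=
  match k with
  | 0 => [set u]
  | k'.+1 => nball k' u :|: [set y | [exists x in nball k' u, e x y]]
  end.

(* graph distance: least k with v in nball k u (search up to #|T|, which
   suffices in a connected graph) *)
Definition dist (u v : T) : nat :=
  find (fun k => v \in nball k u) (iota 0 #|T|.+1).

Definition ecc (u : T) : nat := \max_(v : T) dist u v.

Definition sigma0 : rat := (\sum_(u : T) ecc u)%:R / #|T|%:R.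
Definition sigma1 : nat := \sum_(u : T) (ecc u) ^ 2.

Definition colorable (k : nat) : bool :=
  [exists f : {ffun T -> 'I_k}, [forall x, forall y, e x y ==> (f x != f y)]].
(* least k such that G is k-colorable (always <= #|T| for simple graphs) *)
Definition chromatic_number : nat := find colorable (iota 0 #|T|.+1).

Definition is_clique (A : {set T}) : bool :=
  [forall x in A, forall y in A, (x != y) ==> e x y].
Definition clique_number : nat := \max_(A : {set T} | is_clique A) #|A|.

Definition dominating (v : T) : bool := [forall u, (u != v) ==> e v u].
End Graphs.

Definition graph_iso (T T' : finType) (e : rel T) (e' : rel T') : Prop :=
  exists f : T -> T', bijective f /\ forall x y, e' (f x) (f y) = e x y.

Definition complete_rel (T : finType) : rel T := fun x y => x != y.
Definition empty_rel (T : finType) : rel T := fun _ _ => false.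
Definition join_rel (A B : finType) (eA : rel A) (eB : rel B) : rel (A + B)%type :=
  fun x y => match x, y with
             | inl a, inl a' => eA a a'
             | inr b, inr b' => eB b b'
             | _, _ => true
             end.
Definition Kjoin_coK (r s : nat) : rel ('I_r + 'I_s)%type :=
  join_rel (@complete_rel 'I_r) (@empty_rel 'I_s).

From mathcomp Require Import all_boot all_order all_algebra.
From mathcomp Require Import zify.
Import GRing.Theory Num.Theory.
Set Implicit Arguments. Unset Strict Implicit. Unset Printing Implicit Defensive.

(* Let D be the number of dominating vertices of G.  A vertex has eccentricity
   1 iff it dominates, and every other vertex has eccentricity >= 2, with
   equality as soon as some vertex dominates.  Hence for any nondecreasing
   weight F, sum_u F(ecc u) + (F 2 - F 1) D >= F(2) n, with equality when
   D > 0 (Lemma weighted_ecc_sum; F = id and F = square give the bounds).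
   The dominating vertices together with any clique form a clique, so if all
   cliques have at most k vertices (which holds both when chi(G) = k and when
   omega(G) = k) then D <= k - 1; this yields both bounds, with equality iff
   D = k - 1 (Lemma eccentricity_bounds).  Finally, when chi(G) = k and
   D = k - 1, the non-dominating vertices are pairwise non-adjacent (else they
   would extend the dominating vertices to a (k+1)-clique), which means that
   G is K_(k-1) joined with the edgeless graph on n+1-k vertices; conversely
   that join has exactly k - 1 dominating vertices (Lemma Kjoin_iff). *)

Lemma exists_other (U : finType) (x : U) : 1 < #|U| -> exists y, y != x.
Proof.
move=> hU; apply/existsP; rewrite -negb_forall; apply: contraTN hU => /forallP all_x.
by rewrite -leqNgt -(card1 x) subset_leq_card //; apply/subsetP => y _; apply: all_x.
Qed.

Section Eccentricity.
Variables (T : finType) (e : rel T).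
Hypothesis esym : symmetric e.

Local Notation Dom := [set v | dominating e v].

Lemma nball_monotone i j u : i <= j -> nball e i u \subset nball e j u.
Proof.
move/subnKC <-; elim: (j - i) => [|m IH]; first by rewrite addn0.
by rewrite addnS /=; apply: subset_trans IH (subsetUl _ _).
Qed.

Lemma dist_le u v j : j <= #|T| -> (dist e u v <= j) = (v \in nball e j u).
Proof.
move=> hj; rewrite /dist; set P := fun k => v \in nball e k u.
apply/idP/idP => [le_find|v_in].
- have hasP : has P (iota 0 #|T|.+1).
    by rewrite has_find size_iota (leq_ltn_trans le_find).
  have lt_find := hasP; rewrite has_find size_iota in lt_find.
  have := nth_find 0 hasP; rewrite nth_iota // add0n.
  exact: subsetP (nball_monotone u le_find) v.
- rewrite leqNgt; apply/negP => /(before_find 0).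
  by rewrite nth_iota ?ltnS // add0n /P v_in.
Qed.

Lemma ecc_le u j : j <= #|T| -> (ecc e u <= j) = [forall v, v \in nball e j u].
Proof.
move=> hj; apply/bigmax_leqP/forallP => [h v | h v _].
- by rewrite -dist_le //; apply: h.
- by rewrite dist_le.
Qed.

Lemma in_nball1 u v : (v \in nball e 1 u) = (v == u) || e u v.
Proof.
rewrite /= !inE; congr (_ || _); apply/existsP/idP => [[x]|euv].
- by rewrite inE => /andP[/eqP ->].
- by exists u; rewrite inE eqxx.
Qed.

Lemma in_nball2 u x v : e u x -> e x v -> v \in nball e 2 u.
Proof.
move=> eux exv; rewrite /= inE; apply/orP; right; rewrite inE.
by apply/existsP; exists x; rewrite -/(nball e 1 u) in_nball1 eux orbT.
Qed.

Lemma dominating_adj w x : dominating e w -> x != w -> e w x.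
Proof. by move/forallP => /(_ x) /implyP. Qed.

Lemma ecc_le1 u : (ecc e u <= 1) = dominating e u.
Proof.
have hT : 0 < #|T| by apply/card_gt0P; exists u.
rewrite ecc_le //; apply/forallP/forallP => h v; move: (h v).
- by rewrite in_nball1 => /orP[/eqP ->|->]; rewrite ?eqxx ?implybT.
- by rewrite in_nball1; case: eqP.
Qed.

Lemma ecc_dominating u : 1 < #|T| -> dominating e u -> ecc e u = 1.
Proof.
move=> hT du; apply/eqP; rewrite eqn_leq ecc_le1 du ltnNge ecc_le //.
have [v v_ne_u] := exists_other u hT.
by apply/negP => /forallP /(_ v); rewrite /= inE (negPf v_ne_u).
Qed.

(* In the presence of a dominating vertex w, every vertex is within distance
   2 of every other one, through w. *)
Lemma ecc_le2 u w : 1 < #|T| -> dominating e w -> ecc e u <= 2.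
Proof.
move=> hT dw; rewrite ecc_le //; apply/forallP => v.
have [->|v_ne_u] := eqVneq v u.
  by apply: (subsetP (nball_monotone u (isT : 0 <= 2))); rewrite /= inE.
have [u_w|u_ne_w] := eqVneq u w.
  apply: (subsetP (nball_monotone u (isT : 1 <= 2))); subst u.
  by rewrite in_nball1 dominating_adj ?orbT.
have [v_w|v_ne_w] := eqVneq v w.
  apply: (subsetP (nball_monotone u (isT : 1 <= 2))).
  by rewrite in_nball1 v_w esym dominating_adj ?orbT.
by apply: (in_nball2 (x := w)); [rewrite esym|]; apply: dominating_adj.
Qed.

Lemma card_dominating : #|Dom| = \sum_u (dominating e u : nat).
Proof.
rewrite -sum1_card big_mkcond /=; apply: eq_bigr => u _.
by rewrite inE; case: dominating.
Qed.

(* Crediting each dominating vertex with F 2 - F 1 lifts its weight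
   F (ecc u) = F 1 to F 2; for nondecreasing F every other vertex already
   weighs at least F 2, and exactly F 2 once some vertex dominates. *)
Lemma weighted_ecc_sum (F : nat -> nat) :
  1 < #|T| -> {homo F : x y / x <= y} ->
  F 2 * #|T| <= \sum_u F (ecc e u) + (F 2 - F 1) * #|Dom| /\
  (0 < #|Dom| -> \sum_u F (ecc e u) + (F 2 - F 1) * #|Dom| = F 2 * #|T|).
Proof.
move=> hT F_mono; have F12 : F 1 <= F 2 by apply: F_mono.
have credit_dominating u : dominating e u ->
    F (ecc e u) + (F 2 - F 1) = F 2.
  by move=> du; rewrite ecc_dominating // subnKC.
have some_dominating : 0 < #|Dom| -> exists w, dominating e w.
  by case/card_gt0P => w; rewrite inE; exists w.
split=> [|/some_dominating[w dw]];
  rewrite card_dominating big_distrr -big_split /= mulnC -sum_nat_const.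
- apply: leq_sum => u _; case du: (dominating e u).
    by rewrite muln1 credit_dominating.
  by rewrite muln0 addn0 F_mono // ltnNge ecc_le1 du.
- apply: eq_bigr => u _; case du: (dominating e u).
    by rewrite muln1 credit_dominating.
  have ecc2 : ecc e u = 2.
    by apply/eqP; rewrite eqn_leq (ecc_le2 _ hT dw) ltnNge ecc_le1 du.
  by rewrite muln0 addn0 ecc2.
Qed.

End Eccentricity.

Lemma credited_sum_bound (S D c N m : nat) :
  0 < c -> 0 < m -> D <= m -> c * m < N ->
  N <= S + c * D -> (0 < D -> S + c * D = N) ->
  N - c * m <= S /\ (S = N - c * m <-> D = m).
Proof.
move=> c_gt0 m_gt0 le_Dm lt_cmN lower tight.
have le_cDm : c * D <= c * m by rewrite leq_pmul2l.
have [D0|/tight S_eq] := posnP D.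
  by move: lower; rewrite D0 muln0 addn0; nia.
split; first lia.
split=> [S_eq'|D_m]; last by rewrite D_m in S_eq; lia.
by apply/eqP; rewrite -(eqn_pmul2l c_gt0); apply/eqP; lia.
Qed.

Lemma average_bound (R : numFieldType) (c N a s : nat) : 0 < N -> a <= c * N ->
  ((c%:R - a%:R / N%:R <= s%:R / N%:R :> R)%R = (c * N - a <= s)) /\
  ((s%:R / N%:R = c%:R - a%:R / N%:R :> R)%R <-> s = c * N - a).
Proof.
move=> N_gt0 le_a; have N_neq0 : (N%:R != 0 :> R)%R by rewrite pnatr_eq0 -lt0n.
have -> : (c%:R - a%:R / N%:R : R)%R = ((c * N - a)%:R / N%:R)%R.
  by rewrite natrB // natrM mulrBl mulfK.
split; first by rewrite ler_pM2r ?invr_gt0 ?ltr0n // ler_nat.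
split=> [avg_eq|->] //; apply/eqP; rewrite -(eqr_nat R); apply/eqP.
by apply: (mulIf (invr_neq0 N_neq0)); exact: avg_eq.
Qed.

Lemma graph_iso_inv (T T' : finType) (e : rel T) (e' : rel T') (g : T' -> T) :
  bijective g -> (forall p q, e (g p) (g q) = e' p q) -> graph_iso e e'.
Proof.
case=> f gK fK g_edge; exists f; split; first by exists g.
by move=> x y; rewrite -g_edge !fK.
Qed.

Lemma card_dominating_iso (T T' : finType) (e : rel T) (e' : rel T') :
  graph_iso e e' -> #|[set v | dominating e v]| = #|[set v | dominating e' v]|.
Proof.
case=> f [f_bij f_edge]; have [g fK gK] := f_bij.
have dominating_f x : dominating e' (f x) = dominating e x.
  apply/forallP/forallP => dom u.
  - by move: (dom (f u)); rewrite (inj_eq (bij_inj f_bij)) f_edge.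
  - by rewrite -[u]gK (inj_eq (bij_inj f_bij)) f_edge; apply: dom.
rewrite -(on_card_preimset (onW_bij _ f_bij)).
by apply: eq_card => x; rewrite !inE dominating_f.
Qed.

Lemma card_dominating_Kjoin (a b : nat) :
  1 < b -> #|[set p | dominating (@Kjoin_coK a b) p]| = a.
Proof.
move=> hb; have inl_inj : injective (@inl 'I_a 'I_b) by move=> i j [].
have -> : [set p | dominating (@Kjoin_coK a b) p] = inl @: [set: 'I_a].
  apply/setP => -[i|j]; rewrite inE.
    rewrite mem_imset // inE; apply/forallP => -[j|j] //=.
    by rewrite /complete_rel (inj_eq inl_inj) eq_sym implybb.
  have [j' j'_ne_j] : exists j', j' != j by apply: exists_other; rewrite card_ord.
  rewrite (_ : inr j \in _ = false); last by apply/imsetP => -[].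
  by apply/negbTE/forallP => /(_ (inr j')); rewrite /= j'_ne_j.
by rewrite card_imset // cardsT card_ord.
Qed.

Section DominatingVertices.
Variables (T : finType) (e : rel T).
Hypotheses (esym : symmetric e) (eirr : irreflexive e).

Local Notation Dom := [set v | dominating e v].

Lemma clique_set1 x : is_clique e [set x].
Proof.
apply/forallP => a; apply/implyP; rewrite inE => /eqP ->.
by apply/forallP => b; apply/implyP; rewrite inE => /eqP ->; rewrite eqxx.
Qed.

Lemma clique_set2 x y : e x y -> is_clique e [set x; y].
Proof.
move=> exy; apply/forallP => a; apply/implyP; rewrite !inE => aP.
apply/forallP => b; apply/implyP; rewrite !inE => bP; apply/implyP.
by case/orP: aP => /eqP->; case/orP: bP => /eqP->; rewrite ?eqxx // esym.
Qed.

Lemma clique_setU_dominating C : is_clique e C -> is_clique e (C :|: Dom).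
Proof.
move=> /forallP hC; apply/forallP => a; apply/implyP; rewrite inE => aCD.
apply/forallP => b; apply/implyP; rewrite inE => bCD; apply/implyP => a_ne_b.
case/orP: aCD => [aC|]; last by rewrite inE => da; apply: dominating_adj; rewrite // eq_sym.
case/orP: bCD => [bC|]; last by rewrite inE esym => db; apply: dominating_adj.
by move: (hC a); rewrite aC => /forallP /(_ b); rewrite bC a_ne_b.
Qed.

(* If no clique has more than k < #|T| vertices, some vertex does not
   dominate, and it extends the dominating vertices to a clique. *)
Lemma card_dominating_lt k :
  (forall C, is_clique e C -> #|C| <= k) -> k < #|T| -> #|Dom| < k.
Proof.
move=> bounded kT; have [x xN] : exists x, x \notin Dom.
  apply/existsP; rewrite -negb_forall; apply: contraTN kT => /forallP allD.
  have clique0 : is_clique e set0 by apply/forallP => a; rewrite inE.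
  rewrite -leqNgt; apply: leq_trans (bounded _ (clique_setU_dominating clique0)).
  by rewrite subset_leq_card //; apply/subsetP => v _; rewrite inE allD orbT.
by have := bounded _ (clique_setU_dominating (clique_set1 x)); rewrite cardsU1 xN.
Qed.

(* When no clique exceeds the dominating vertices by two, the non-dominating
   vertices are pairwise non-adjacent: an edge between two of them would
   extend the dominating vertices to a larger clique. *)
Lemma nondominating_independent x y :
  (forall C, is_clique e C -> #|C| <= #|Dom|.+1) ->
  x \notin Dom -> y \notin Dom -> ~~ e x y.
Proof.
move=> bounded xN yN; apply/negP => exy.
have x_ne_y : x != y by apply: contraTneq exy => ->; rewrite eirr.
have := bounded _ (clique_setU_dominating (clique_set2 exy)).
by rewrite -setUA !cardsU1 in_setU1 negb_or x_ne_y xN yN addnS ltnn.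
Qed.

(* A proper colouring is injective on every clique. *)
Lemma clique_le_colorable j C : is_clique e C -> colorable e j -> #|C| <= j.
Proof.
move=> /forallP hC /existsP[f /forallP proper].
have f_inj : {in C &, injective f}.
  move=> x y xC yC fxy; apply/eqP; apply: contraTT (xC) => x_ne_y.
  move: (hC x) (proper x) => /implyP hCx /forallP /(_ y) /implyP proper_xy.
  apply/negP => /hCx /forallP /(_ y); rewrite yC x_ne_y /= => exy.
  by move: (proper_xy exy); rewrite fxy eqxx.
rewrite -(card_in_imset f_inj).
by apply: leq_trans (max_card _) _; rewrite card_ord.
Qed.

(* Colouring each vertex by its rank is proper, so the search defining the
   chromatic number succeeds and yields a proper colouring. *)
Lemma colorable_card : colorable e #|T|.
Proof.
apply/existsP; exists [ffun x => enum_rank x]; apply/forallP => x; apply/forallP => y.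
apply/implyP => exy; rewrite !ffunE (inj_eq enum_rank_inj).
by apply: contraTneq exy => ->; rewrite eirr.
Qed.

Lemma chromatic_colorable : colorable e (chromatic_number e).
Proof.
have has_col : has (colorable e) (iota 0 #|T|.+1).
  by apply/hasP; exists #|T|; rewrite ?mem_iota ?add0n ?ltnS ?leqnn ?colorable_card.
have lt_find := has_col; rewrite has_find size_iota in lt_find.
by have := nth_find 0 has_col; rewrite nth_iota.
Qed.

Lemma clique_le_clique_number C : is_clique e C -> #|C| <= clique_number e.
Proof. exact: leq_bigmax_cond. Qed.

Lemma clique_le_chromatic C : is_clique e C -> #|C| <= chromatic_number e.
Proof. by move/clique_le_colorable; apply; apply: chromatic_colorable. Qed.

Lemma Kjoin_iso a b : #|Dom| = a -> #|~: Dom| = b ->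
  {in ~: Dom &, forall x y, ~~ e x y} -> graph_iso e (@Kjoin_coK a b).
Proof.
move=> Da Nb indep.
pose g (p : 'I_a + 'I_b) : T := match p with
  | inl i => enum_val (cast_ord (sym_eq Da) i)
  | inr j => enum_val (cast_ord (sym_eq Nb) j) end.
have gD i : g (inl i) \in Dom by apply: enum_valP.
have gN j : g (inr j) \in ~: Dom by apply: enum_valP.
have g_inj : injective g.
  have gDN i j : g (inl i) != g (inr j).
    by apply: contraTneq (gD i) => ->; rewrite -in_setC gN.
  case=> [i|i] [j|j] eq_g.
  - by move: eq_g; rewrite /g => /enum_val_inj /cast_ord_inj ->.
  - by move: (gDN i j); rewrite eq_g eqxx.
  - by move: (gDN j i); rewrite eq_g eqxx.
  - by move: eq_g; rewrite /g => /enum_val_inj /cast_ord_inj ->.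
have g_bij : bijective g.
  by apply: (inj_card_bij g_inj); rewrite card_sum !card_ord -Da -Nb cardsC.
have adj_left i q : q != inl i -> e (g (inl i)) (g q).
  move=> q_ne; apply: dominating_adj; first by move: (gD i); rewrite inE.
  by rewrite (inj_eq g_inj).
apply: (graph_iso_inv g_bij) => -[i|i] [j|j]; rewrite [RHS]/=.
- rewrite /complete_rel; have [->|i_ne_j] := eqVneq i j; first by rewrite eirr.
  by rewrite adj_left //; apply: contraNneq i_ne_j => -[->].
- by rewrite adj_left.
- by rewrite esym adj_left.
- by apply/negbTE/indep.
Qed.

Lemma Kjoin_iff n k : #|T| = n -> 0 < k -> k < n ->
  (forall C, is_clique e C -> #|C| <= k) ->
  #|Dom| = k - 1 <-> graph_iso e (@Kjoin_coK (k - 1) (n + 1 - k)).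
Proof.
move=> hn k_gt0 lt_kn bounded.
split=> [D_eq|/card_dominating_iso ->]; last by rewrite card_dominating_Kjoin //; lia.
apply: Kjoin_iso => //; first by have := cardsC Dom; lia.
move=> x y; rewrite !in_setC => xN yN; apply: nondominating_independent => //.
by move=> C /bounded; rewrite D_eq; lia.
Qed.

Lemma eccentricity_bounds n k : #|T| = n -> 2 <= k -> k <= n - 1 ->
  (forall C, is_clique e C -> #|C| <= k) ->
  [/\ 2 * n - (k - 1) <= \sum_u ecc e u, 4 * n + 3 - 3 * k <= sigma1 e,
      \sum_u ecc e u = 2 * n - (k - 1) <-> #|Dom| = k - 1 &
      sigma1 e = 4 * n + 3 - 3 * k <-> #|Dom| = k - 1].
Proof.
move=> hn hk2 hkn bounded; have hT : 1 < #|T| by lia.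
have le_D : #|Dom| <= k - 1 by have := card_dominating_lt bounded; lia.
have [sum_lower sum_tight] := weighted_ecc_sum (F := id) esym hT (fun _ _ le => le).
have sq_mono : {homo (fun x => x ^ 2) : x y / x <= y} by move=> x y; rewrite leq_sqr.
have [sq_lower sq_tight] := weighted_ecc_sum esym hT sq_mono.
rewrite hn in sum_lower sum_tight sq_lower sq_tight.
have [|||sum_bound sum_eq] :=
  credited_sum_bound (c := 1) (N := 2 * n) _ _ le_D _ sum_lower sum_tight; try lia.
have [|||sq_bound sq_eq] :=
  credited_sum_bound (c := 3) (N := 4 * n) _ _ le_D _ sq_lower sq_tight; try lia.
have -> : 4 * n + 3 - 3 * k = 4 * n - 3 * (k - 1) by lia.
by rewrite mul1n in sum_bound sum_eq.
Qed.

End DominatingVertices.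

Theorem theorem4p2 (T : finType) (e : rel T) (n k : nat)
  (esym : symmetric e) (eirr : irreflexive e)
  (hn : #|T| = n) (hk2 : 2 <= k) (hkn : k <= n - 1)
  (hconn : connected_graph e) :
  (chromatic_number e = k ->
     ((2 - (k - 1)%N%:R / n%:R <= sigma0 e)%R
      /\ 4 * n + 3 - 3 * k <= sigma1 e
      /\ (sigma0 e = (2 - (k - 1)%N%:R / n%:R)%R <-> graph_iso e (@Kjoin_coK (k - 1) (n + 1 - k)))
      /\ (sigma1 e = 4 * n + 3 - 3 * k <-> graph_iso e (@Kjoin_coK (k - 1) (n + 1 - k)))))
  /\
  (clique_number e = k ->
     ((2 - (k - 1)%N%:R / n%:R <= sigma0 e)%R
      /\ 4 * n + 3 - 3 * k <= sigma1 e
      /\ (sigma0 e = (2 - (k - 1)%N%:R / n%:R)%R <-> #|[set v | dominating e v]| = k - 1)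
      /\ (sigma1 e = 4 * n + 3 - 3 * k <-> #|[set v | dominating e v]| = k - 1))).
Proof.
have n_gt0 : 0 < n by lia.
have le_k : k - 1 <= 2 * n by lia.
have [avg_le avg_eq] := @average_bound rat 2 n (k - 1) (\sum_u ecc e u) n_gt0 le_k.
have sigma0E : sigma0 e = ((\sum_u ecc e u)%:R / n%:R)%R by rewrite /sigma0 hn.
rewrite sigma0E avg_le avg_eq; split=> [chi_k|omega_k].
- have bounded C : is_clique e C -> #|C| <= k.
    by rewrite -chi_k; apply: clique_le_chromatic.
  have [sum_lower sq_lower sum_eq sq_eq] := eccentricity_bounds esym hn hk2 hkn bounded.
  have join_iff : #|[set v | dominating e v]| = k - 1 <->
      graph_iso e (@Kjoin_coK (k - 1) (n + 1 - k)) by apply: Kjoin_iff => //; lia.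
  split=> //; split=> //; split; first exact: iff_trans sum_eq join_iff.
  exact: iff_trans sq_eq join_iff.
- have bounded C : is_clique e C -> #|C| <= k.
    by rewrite -omega_k; apply: clique_le_clique_number.
  by have [? ? ? ?] := eccentricity_bounds esym hn hk2 hkn bounded.
Qed.
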